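(* The function $F_m$ is strictly decreasing on $(-\infty,0)$ and strictly increasing on $(0,\infty)$. In particular, the set of minimizers of $F_m$ over $\mathbb R$ is $\{0\}$.
   Context: Fix $m>1/2$. Let $c_m:=\left(\int_{\mathbb R}(1+x^2)^{-m}dx\right)^{-1}$ and $\nu_m(dx):=c_m(1+x^2)^{-m}dx$. Define $F_m(t):=\int_{\mathbb R}\log(1+(x-t)^2)\,\nu_m(dx)$ for $t\in\mathbb R$. *)

From HB Require Import structures.
From mathcomp Require Import all_boot all_order all_algebra.
From mathcomp Require Import all_classical all_reals all_analysis.
Set Implicit Arguments. Unset Strict Implicit. Unset Printing Implicit Defensive.
Import Order.TTheory GRing.Theory Num.Theory.
Import numFieldNormedType.Exports.
Local Open Scope classical_set_scope.
Local Open Scope ring_scope.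

Definition dens_m (R : realType) (m : R) (x : R) : R := (1 + x ^+ 2) `^ (- m).

Definition c_m (R : realType) (m : R) : R :=
  (\int[@lebesgue_measure R]_(x in [set: R]) dens_m m x)^-1.

Definition F_m (R : realType) (m : R) (t : R) : R :=
  \int[@lebesgue_measure R]_(x in [set: R])
     (ln (1 + (x - t) ^+ 2) * (c_m m * dens_m m x)).

From HB Require Import structures.
From mathcomp Require Import all_boot all_order all_algebra.
From mathcomp Require Import all_classical all_reals all_analysis.
From mathcomp Require Import ring lra.
From mathcomp Require Import measurable_realfun.
Import Order.TTheory GRing.Theory Num.Theory.
Import numFieldNormedType.Exports.
Local Open Scope classical_set_scope.
Local Open Scope ring_scope.
Set Implicit Arguments. Unset Strict Implicit. Unset Printing Implicit Defensive.

(* Since nu_m is even, F_m is even, and it suffices to show F_m(s) < F_m(t)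
   for 0 <= s < t.  Write F_m(t) = \int L(x - t) V(x) dx with L(u) = ln(1 + u^2)
   and V the density of nu_m, both even functions.  Substituting x |-> s + t - x in one copy of each
   integral gives
     2 F_m(t) - 2 F_m(s) = \int (L(x - t) - L(x - s)) (V(x) - V(s + t - x)) dx,
   and both factors change sign exactly at x = (s + t) / 2, in the same
   direction: the integrand is nonnegative, continuous and positive at
   x = s - 1.  All integrals are finite because ln z <= z^e / e and
   (1 + x^2)^(-m) <= 2^m (1 + |x|)^(-2m) with 2m > 1. *)

Section continuity.
Context {R : realType}.

Lemma continuous_powR (r a : R) : 0 < a -> {for a, continuous (@powR R ^~ r)}.
Proof.
move=> a0; apply: differentiable_continuous; apply/derivable1_diffP.
by have [] := is_derive1_powR r a0.
Qed.

Lemma continuous_powR_normr1 (r : R) : continuous (fun x : R => (`|x| + 1) `^ r).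
Proof.
move=> x; apply: (@continuous_comp _ _ _ (fun x : R => `|x| + 1) (@powR R ^~ r)).
  by apply: continuousD; [exact: norm_continuous | exact: cst_continuous].
by apply: continuous_powR; rewrite ltr_wpDl.
Qed.

Lemma continuous_comp_addr (f : R -> R) (a : R) :
  continuous f -> continuous (fun x => f (x + a)).
Proof.
move=> cf x; apply: (@continuous_comp _ _ _ (fun x : R => x + a) f); last exact: cf.
by apply: continuousD; [exact: cvg_id | exact: cvg_cst].
Qed.

Lemma continuous_comp_subl (f : R -> R) (a : R) :
  continuous f -> continuous (fun x => f (a - x)).
Proof.
move=> cf x; apply: (@continuous_comp _ _ _ (fun x : R => a - x) f); last exact: cf.
by apply: continuousB; [exact: cvg_cst | exact: cvg_id].
Qed.

Lemma continuous_1sqr_subr (t : R) : continuous (fun x : R => 1 + (x - t) ^+ 2).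
Proof.
have -> : (fun x : R => 1 + (x - t) ^+ 2) =
    cst 1 + ((fun x => x - t) \* (fun x => x - t)).
  by apply/funext => y; rewrite /= expr2.
have cB : continuous (fun x : R => x - t).
  by move=> y; apply: continuousB; [exact: cvg_id | exact: cvg_cst].
move=> x; apply: continuousD; first exact: cst_continuous.
by apply: continuousM; apply: cB.
Qed.

End continuity.

Section powR_tail.
Context {R : realType}.
Local Notation mu := (@lebesgue_measure R).

Lemma powRN_addr1_cvgy (q : R) : 0 < q -> (x + 1) `^ (- q) @[x --> +oo] --> (0 : R).
Proof.
move=> q0; apply/cvgrPdist_lt => e e0.
near=> x.
have x0 : 0 < x by near: x; apply: nbhs_pinfty_gt; rewrite num_real.
have xb : (e^-1) `^ (q^-1) < x by near: x; apply: nbhs_pinfty_gt; rewrite num_real.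
rewrite sub0r normrN ger0_norm ?powR_ge0// powRN.
rewrite -[e]invrK ltf_pV2 ?posrE ?invr_gt0 ?powR_gt0 ?ltr_wpDl ?ltW//.
have -> : e^-1 = ((e^-1) `^ (q^-1)) `^ q.
  by rewrite -powRrM mulVf ?gt_eqF// powRr1// invr_ge0 ltW.
apply: gt0_ltr_powR => //; rewrite ?nnegrE ?powR_ge0 ?addr_ge0 ?ltW//.
by rewrite (lt_le_trans xb)// lerDl.
Unshelve. all: end_near. Qed.

Lemma is_derive_powRN_addr1 (q x : R) : 0 < q -> -1 < x ->
  is_derive x 1 (fun y => - q^-1 * (y + 1) `^ (- q)) ((x + 1) `^ (- q - 1)).
Proof.
move=> q0 x1.
have x10 : 0 < x + 1 by rewrite -ltrBlDr sub0r.
have dpow := is_derive1_powR (- q) x10.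
have dshift : is_derive x 1 (shift 1 : R -> R) 1 := is_derive_shift x 1 1.
have := is_deriveZ (- q^-1) (@is_derive1_comp R _ (shift 1) x _ _ dpow dshift).
have -> : (fun y => - q^-1 * (y + 1) `^ (- q)) =
    - q^-1 \*: ((@powR R ^~ (- q)) \o shift 1) by apply/funext.
by rewrite /GRing.scale/= mulr1 mulrA mulrNN mulVf ?gt_eqF// mul1r.
Qed.

Lemma integral_powRN_normr1_lty (p : R) : 1 < p ->
  (\int[mu]_x ((`|x| + 1) `^ (- p))%:E < +oo)%E.
Proof.
move=> p1; set h := fun x : R => (`|x| + 1) `^ (- p).
rewrite (@ge0_symfun_integralT _ h); first last.
- by move=> x; rewrite /h /= normrN.
- exact: continuous_powR_normr1.
- by move=> x; apply: powR_ge0.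
set q := p - 1; have q0 : 0 < q by rewrite subr_gt0.
set H := fun y : R => - q^-1 * (y + 1) `^ (- q).
have dH (x : R) : 0 < x -> is_derive x 1 H (h x).
  move=> x0; rewrite /h gtr0_norm// (_ : - p = - q - 1); last by rewrite /q; lra.
  by apply: is_derive_powRN_addr1 => //; rewrite (lt_trans _ x0)// ltrN10.
have cH0 : {for 0, continuous H}.
  apply: differentiable_continuous; apply/derivable1_diffP.
  by have [] := is_derive_powRN_addr1 q0 (ltrN10 R).
rewrite -set_itvcy (@ge0_continuous_FTC2y _ h H 0 0).
- by rewrite -EFinB -EFinM ltry.
- by move=> x _; apply: powR_ge0.
- exact/continuous_subspaceT/continuous_powR_normr1.
- by rewrite -(mulr0 (- q^-1)); apply: cvgMl_tmp; exact: powRN_addr1_cvgy.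
- by move=> x x0; have [] := dH x x0.
- exact: cvg_at_right_filter.
- move=> x; rewrite in_itv/= andbT => x0.
  by rewrite derive1E; have [_ ->] := dH x x0.
Qed.

End powR_tail.

Section lebesgue_integral_R.
Context {R : realType}.
Local Notation mu := (@lebesgue_measure R).
Local Open Scope ereal_scope.

Lemma ge0_integral_lty_le (f h : R -> R) (K : R) :
  measurable_fun [set: R] f -> measurable_fun [set: R] h ->
  (forall x, 0 <= f x)%R -> (forall x, 0 <= h x)%R -> (0 <= K)%R ->
  (forall x, f x <= K * h x)%R ->
  \int[mu]_x (h x)%:E < +oo -> \int[mu]_x (f x)%:E < +oo.
Proof.
move=> mf mh f0 h0 K0 fh hfin.
apply: (@le_lt_trans _ _ (\int[mu]_x (K%:E * (h x)%:E))).
  apply: ge0_le_integral => //.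
  - by move=> x _; rewrite lee_fin.
  - exact/measurable_EFinP.
  - by apply: emeasurable_funM => //; apply/measurable_EFinP.
  - by move=> x _; rewrite -EFinM lee_fin.
rewrite ge0_integralZl_EFin//; last 2 first.
- by move=> x _; rewrite lee_fin.
- exact/measurable_EFinP.
have hge0 : 0 <= \int[mu]_x (h x)%:E by apply: integral_ge0 => x _; rewrite lee_fin.
by rewrite ltey_eq fin_numM// ge0_fin_numE.
Qed.

Lemma ge0_continuous_integral_gt0 (k : R -> R) (y : R) :
  (forall x, 0 <= k x)%R -> continuous k -> (0 < k y)%R ->
  0 < \int[mu]_x (k x)%:E.
Proof.
move=> k0 ck ky.
have mk : measurable_fun [set: R] k by exact: continuous_measurable_fun.
have e0 : (0 < k y / 2)%R by rewrite divr_gt0.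
have [d /= d0 dB] := (nbhs_ballP _ _).1 ((cvgrPdist_lt _ _).1 (ck y) _ e0).
apply: (@lt_le_trans _ _ (\int[mu]_(x in ball y d) (k y / 2)%:E)).
  rewrite integral_cst; last exact: measurable_ball.
  rewrite [X in _ * X](_ : _ = (d *+ 2)%:E); last exact: lebesgue_measure_ball (ltW d0).
  by rewrite -EFinM lte_fin mulr_gt0// mulrn_wgt0.
apply: (@le_trans _ _ (\int[mu]_(x in ball y d) (k x)%:E)).
  apply: ge0_le_integral => //.
  - exact: measurable_ball.
  - by move=> x _; rewrite lee_fin ltW.
  - by apply/measurable_EFinP; apply: measurable_funS mk.
  - move=> x /dB /=; rewrite lee_fin ltr_norml => /andP[h1 h2].
    by apply/ltW; lra.
apply: ge0_subset_integral => //.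
- exact: measurable_ball.
- exact/measurable_EFinP.
- by move=> x _; rewrite lee_fin.
Qed.

Lemma ge0_continuous_integralD (f g : R -> R) :
  (forall x, 0 <= f x)%R -> (forall x, 0 <= g x)%R -> continuous f -> continuous g ->
  \int[mu]_x (f x + g x)%:E = \int[mu]_x (f x)%:E + \int[mu]_x (g x)%:E.
Proof.
move=> f0 g0 cf cg.
under eq_integral do rewrite EFinD.
rewrite ge0_integralD//.
- by move=> x _; rewrite lee_fin.
- by apply/measurable_EFinP; exact: continuous_measurable_fun.
- by move=> x _; rewrite lee_fin.
- by apply/measurable_EFinP; exact: continuous_measurable_fun.
Qed.

Lemma ge0_integral_split_opp (f : R -> R) :
  (forall x, 0 <= f x)%R -> continuous f ->
  \int[mu]_x (f x)%:E = \int[mu]_(x in [set x | (0 <= x)%R]) (f x)%:E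
     + \int[mu]_(x in [set x | (0 <= x)%R]) (f (- x)%R)%:E.
Proof.
move=> f0 cf.
have mf : measurable_fun [set: R] f by exact: continuous_measurable_fun.
have mge0 : measurable [set x : R | 0 <= x]%R by rewrite -set_itvcy.
rewrite -(setUv [set x : R | 0 <= x]%R) ge0_integral_setU//=; first last.
- exact/disj_setPCl.
- by move=> x _; rewrite lee_fin.
- by apply/measurable_EFinP; rewrite setUv.
- exact: measurableC.
congr +%E.
rewrite -set_itvcy setCitvr integral_itv_bndo_bndc; last first.
  exact/measurable_EFinP/measurable_funTS.
rewrite -{1}oppr0 ge0_integration_by_substitutionNy//.
exact: continuous_subspaceT.
Qed.

Lemma ge0_integral_comp_opp (f : R -> R) :
  (forall x, 0 <= f x)%R -> continuous f ->
  \int[mu]_x (f (- x)%R)%:E = \int[mu]_x (f x)%:E.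
Proof.
move=> f0 cf.
rewrite (ge0_integral_split_opp f0 cf) ge0_integral_split_opp//; last first.
  by move=> x; apply: (@continuous_comp _ _ _ -%R f); [exact: opp_continuous|exact: cf].
by rewrite addeC; congr +%E; apply: eq_integral => x _; rewrite opprK.
Qed.

Lemma ge0_integral_comp_addr (f : R -> R) (a : R) :
  (forall x, 0 <= f x)%R -> continuous f ->
  \int[mu]_x (f (x + a)%R)%:E = \int[mu]_x (f x)%:E.
Proof.
move=> f0 cf.
have D1 : ((shift a : R -> R)^`())%classic = cst 1%R.
  by apply/funext => z; rewrite derive1E; have [_ ->] := is_derive_shift z 1%R a.
rewrite (@increasing_ge0_integration_by_substitutionT _ (shift a) f); first last.
- exact: f0.
- exact: cf.
- apply/cvgryPge => r; near=> x.
  rewrite /shift/= -lerBlDr; near: x; apply: nbhs_pinfty_ge; exact: num_real.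
- apply/cvgrNyPle => r; near=> x.
  rewrite /shift/= -lerBrDr; near: x; apply: nbhs_ninfty_le; exact: num_real.
- by move=> x; have [] := is_derive_shift x 1%R a.
- by rewrite D1; exact: is_cvg_cst.
- by rewrite D1; exact: is_cvg_cst.
- by rewrite D1; exact: cst_continuous.
- by move=> x y xy; rewrite /shift/= ltrD2r.
by apply: eq_integral => x _; rewrite D1 /= mulr1.
Unshelve. all: end_near. Qed.

Lemma ge0_integral_comp_subl (f : R -> R) (a : R) :
  (forall x, 0 <= f x)%R -> continuous f ->
  \int[mu]_x (f (a - x)%R)%:E = \int[mu]_x (f x)%:E.
Proof.
move=> f0 cf.
rewrite -[RHS](@ge0_integral_comp_addr f a)//.
rewrite -(@ge0_integral_comp_opp (fun y => f (y + a)%R))//; last first.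
  exact: continuous_comp_addr.
by apply: eq_integral => x _; rewrite addrC.
Qed.

End lebesgue_integral_R.

Section bounds.
Context {R : realType}.

Lemma powRN_1sqr_le (a x : R) : 0 < a ->
  (1 + x ^+ 2) `^ (- a) <= 2 `^ a * (`|x| + 1) `^ (- (2 * a)).
Proof.
move=> a0.
have w0 : 0 < 1 + x ^+ 2 by rewrite ltr_pwDl ?sqr_ge0.
have n0 : 0 < `|x| + 1 by rewrite ltr_wpDl.
have le1 : (`|x| + 1) `^ (2 * a) <= 2 `^ a * (1 + x ^+ 2) `^ a.
  rewrite powRrM powR_mulrn; last exact: ltW.
  rewrite -powRM; [|lra|exact: ltW].
  apply: ge0_ler_powR; rewrite ?nnegrE; [exact: ltW|exact: exprn_ge0 (ltW n0)| |].
    by rewrite mulr_ge0// ltW.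
  rewrite -(real_normK (num_real x)).
  by have := normr_ge0 x; have := sqr_ge0 (`|x| - 1); nra.
rewrite !powRN -[X in X <= _]mul1r ler_pdivrMr ?powR_gt0// mulrAC.
by rewrite ler_pdivlMr ?powR_gt0// mul1r.
Qed.

Lemma ln_le_powR (e z : R) : 0 < e -> 0 < z -> ln z <= e^-1 * z `^ e.
Proof.
move=> e0 z0.
rewrite -(mulKf (lt0r_neq0 e0) (ln z)) -ln_powR ler_pM2l ?invr_gt0//.
exact/ltW/ln_sublinear/powR_gt0.
Qed.

Lemma ln_1sqr_subr_powRN_le (m e t : R) : 0 < e -> e < m ->
  exists2 C : R, 0 <= C & forall x,
    ln (1 + (x - t) ^+ 2) * (1 + x ^+ 2) `^ (- m)
      <= C * (`|x| + 1) `^ (- (2 * (m - e))).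
Proof.
move=> e0 em.
exists (e^-1 * (2 * (1 + t ^+ 2)) `^ e * 2 `^ (m - e)).
  by rewrite !mulr_ge0 ?powR_ge0// invr_ge0 ltW.
move=> x.
have w0 : 0 < 1 + x ^+ 2 by rewrite ltr_pwDl ?sqr_ge0.
have t0 : 0 < 1 + t ^+ 2 by rewrite ltr_pwDl ?sqr_ge0.
have z0 : 0 < 1 + (x - t) ^+ 2 by rewrite ltr_pwDl ?sqr_ge0.
have hz : 1 + (x - t) ^+ 2 <= 2 * (1 + t ^+ 2) * (1 + x ^+ 2).
  by have := sqr_ge0 (x + t); have := sqr_ge0 (x * t); rewrite !expr2; nra.
have lnz : ln (1 + (x - t) ^+ 2) <=
    e^-1 * ((2 * (1 + t ^+ 2)) `^ e * (1 + x ^+ 2) `^ e).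
  apply: (le_trans (ln_le_powR e0 z0)).
  rewrite ler_pM2l ?invr_gt0// -powRM; [|lra|exact: ltW].
  apply: ge0_ler_powR; rewrite ?nnegrE; [exact: ltW|exact: ltW| |exact: hz].
  by have := ltW t0; have := ltW w0; nra.
have wE : (1 + x ^+ 2) `^ e * (1 + x ^+ 2) `^ (- m) = (1 + x ^+ 2) `^ (- (m - e)).
  by rewrite -powRD ?opprB// (gt_eqF w0) implybT.
apply: (le_trans (ler_wpM2r (powR_ge0 _ _) lnz)).
rewrite -!mulrA ler_pM2l ?invr_gt0// ler_pM2l; last by apply: powR_gt0; lra.
by rewrite wE; apply: powRN_1sqr_le; rewrite subr_gt0.
Qed.

End bounds.

Section F_m_monotone.
Context {R : realType}.
Local Notation mu := (@lebesgue_measure R).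
Variable m : R.
Hypothesis hm : 1 / 2 < m.

Let m_gt0 : 0 < m. Proof. by rewrite (lt_trans _ hm)// divr_gt0. Qed.

Lemma continuous_dens_m : continuous (dens_m m).
Proof.
move=> x; apply: (@continuous_comp _ _ _ (fun x : R => 1 + x ^+ 2) (@powR R ^~ (- m))).
  by have := @continuous_1sqr_subr R 0 x; under eq_fun do rewrite subr0.
by apply: continuous_powR; rewrite ltr_pwDl ?sqr_ge0.
Qed.

Lemma dens_m_ge0 x : 0 <= dens_m m x. Proof. exact: powR_ge0. Qed.

Lemma c_m_gt0 : 0 < c_m m.
Proof.
have fin : (\int[mu]_x (dens_m m x)%:E < +oo)%E.
  apply: (@ge0_integral_lty_le _ _ (fun x => (`|x| + 1) `^ (- (2 * m))) (2 `^ m)).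
  - by apply: continuous_measurable_fun; exact: continuous_dens_m.
  - by apply: continuous_measurable_fun; exact: continuous_powR_normr1.
  - exact: dens_m_ge0.
  - by move=> x; apply: powR_ge0.
  - exact: powR_ge0.
  - by move=> x; apply: powRN_1sqr_le.
  - by apply: integral_powRN_normr1_lty; have := hm; lra.
have pos : (0 < \int[mu]_x (dens_m m x)%:E)%E.
  apply: (@ge0_continuous_integral_gt0 _ _ 0 dens_m_ge0 continuous_dens_m).
  by rewrite /dens_m expr0n/= addr0 powR1.
by rewrite /c_m invr_gt0 -lte_fin fineK// ge0_fin_numE// ltW.
Qed.

Definition log1sq (u : R) := ln (1 + u ^+ 2).
Definition nu_pdf (x : R) := c_m m * dens_m m x.
Definition F_integrand (t x : R) := log1sq (x - t) * nu_pdf x.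

Lemma log1sq_ge0 u : 0 <= log1sq u.
Proof. by apply: ln_ge0; rewrite lerDl sqr_ge0. Qed.

Lemma log1sqN u : log1sq (- u) = log1sq u.
Proof. by rewrite /log1sq sqrrN. Qed.

Lemma log1sq_le u v : u ^+ 2 <= v ^+ 2 -> log1sq u <= log1sq v.
Proof. by move=> uv; rewrite /log1sq ler_ln ?posrE ?ltr_pwDl ?sqr_ge0// lerD2l. Qed.

Lemma log1sq_lt u v : u ^+ 2 < v ^+ 2 -> log1sq u < log1sq v.
Proof.
have pos (w : R) : 0 < 1 + w ^+ 2 by rewrite ltr_pwDl ?sqr_ge0.
by move=> uv; rewrite /log1sq ltr_ln ?posrE ?pos// ltrD2l.
Qed.

Lemma continuous_log1sq_subr t : continuous (fun x => log1sq (x - t)).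
Proof.
move=> x; apply: (@continuous_comp _ _ _ (fun x : R => 1 + (x - t) ^+ 2) (@ln R)).
  exact: continuous_1sqr_subr.
by apply: continuous_ln; rewrite ltr_pwDl ?sqr_ge0.
Qed.

Lemma nu_pdf_ge0 x : 0 <= nu_pdf x.
Proof. by rewrite mulr_ge0 ?dens_m_ge0// ltW// c_m_gt0. Qed.

Lemma nu_pdfN x : nu_pdf (- x) = nu_pdf x.
Proof. by rewrite /nu_pdf /dens_m sqrrN. Qed.

Lemma nu_pdf_le u v : u ^+ 2 <= v ^+ 2 -> nu_pdf v <= nu_pdf u.
Proof.
have pos (w : R) : 0 < 1 + w ^+ 2 by rewrite ltr_pwDl ?sqr_ge0.
move=> uv; rewrite ler_pM2l ?c_m_gt0// /dens_m !powRN lef_pV2 ?posrE ?powR_gt0//.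
by apply: ge0_ler_powR; rewrite ?nnegrE ?(ltW m_gt0) ?(ltW (pos _))// lerD2l.
Qed.

Lemma nu_pdf_lt u v : u ^+ 2 < v ^+ 2 -> nu_pdf v < nu_pdf u.
Proof.
have pos (w : R) : 0 < 1 + w ^+ 2 by rewrite ltr_pwDl ?sqr_ge0.
move=> uv; rewrite ltr_pM2l ?c_m_gt0// /dens_m !powRN ltf_pV2 ?posrE ?powR_gt0//.
by apply: gt0_ltr_powR; rewrite ?nnegrE ?(ltW (pos _))// ltrD2l.
Qed.

Lemma continuous_nu_pdf : continuous nu_pdf.
Proof.
move=> x; apply: (@continuousM _ _ (cst (c_m m)) (dens_m m)).
  exact: cst_continuous.
exact: continuous_dens_m.
Qed.

Lemma F_integrand_ge0 t x : 0 <= F_integrand t x.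
Proof. by rewrite mulr_ge0 ?log1sq_ge0 ?nu_pdf_ge0. Qed.

Lemma continuous_F_integrand t : continuous (F_integrand t).
Proof.
move=> x; apply: (@continuousM _ _ (fun x => log1sq (x - t)) nu_pdf).
  exact: continuous_log1sq_subr.
exact: continuous_nu_pdf.
Qed.

Lemma integral_F_integrand_lty t : (\int[mu]_x (F_integrand t x)%:E < +oo)%E.
Proof.
set e := m / 2 - 1 / 4.
have [e0 em] : 0 < e /\ e < m by rewrite /e; have := hm; lra.
have [C C0 bound] := ln_1sqr_subr_powRN_le t e0 em.
apply: (@ge0_integral_lty_le _ _ (fun x => (`|x| + 1) `^ (- (2 * (m - e))))
  (c_m m * C)).
- by apply: continuous_measurable_fun; exact: continuous_F_integrand.
- by apply: continuous_measurable_fun; exact: continuous_powR_normr1.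
- exact: F_integrand_ge0.
- by move=> x; apply: powR_ge0.
- by rewrite mulr_ge0// ltW// c_m_gt0.
- move=> x; rewrite /F_integrand /nu_pdf mulrCA -[_ * C * _]mulrA.
  by rewrite ler_pM2l ?c_m_gt0//; exact: bound.
- by apply: integral_powRN_normr1_lty; rewrite /e; have := hm; lra.
Qed.

Lemma F_m_integrand t : F_m m t = fine (\int[mu]_x (F_integrand t x)%:E).
Proof. by []. Qed.

Lemma F_mN t : F_m m (- t) = F_m m t.
Proof.
rewrite !F_m_integrand -(@ge0_integral_comp_opp _ (F_integrand t)).
- congr fine; apply: eq_integral => x _; congr EFin.
  by rewrite /F_integrand nu_pdfN -log1sqN; congr (log1sq _ * _); ring.
- exact: F_integrand_ge0.
- exact: continuous_F_integrand.
Qed.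

Definition pair_gap (s t x : R) :=
  (log1sq (x - t) - log1sq (x - s)) * (nu_pdf x - nu_pdf (s + t - x)).

Lemma F_integrand_pair s t x :
  F_integrand t x + F_integrand t (s + t - x) =
  pair_gap s t x + (F_integrand s x + F_integrand s (s + t - x)).
Proof.
rewrite /F_integrand /pair_gap.
have -> : s + t - x - t = - (x - s) by ring.
have -> : s + t - x - s = - (x - t) by ring.
by rewrite !log1sqN; ring.
Qed.

Lemma pair_gap_ge0 s t : 0 <= s -> s < t -> forall x, 0 <= pair_gap s t x.
Proof.
move=> s0 st x; rewrite /pair_gap.
have [hx|hx] := leP (2 * x) (s + t).
- apply: mulr_ge0; rewrite subr_ge0.
  + apply: log1sq_le; rewrite !expr2.
    have : 0 <= (t - s) * (s + t - 2 * x) by apply: mulr_ge0; lra.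
    nra.
  + apply: nu_pdf_le; rewrite !expr2.
    have : 0 <= (s + t) * (s + t - 2 * x) by apply: mulr_ge0; lra.
    nra.
- apply: mulr_le0; rewrite subr_le0.
  + apply: log1sq_le; rewrite !expr2.
    have : 0 <= (t - s) * (2 * x - (s + t)) by apply: mulr_ge0; lra.
    nra.
  + apply: nu_pdf_le; rewrite !expr2.
    have : 0 <= (s + t) * (2 * x - (s + t)) by apply: mulr_ge0; lra.
    nra.
Qed.

Lemma pair_gap_gt0 s t : 0 <= s -> s < t -> 0 < pair_gap s t (s - 1).
Proof.
move=> s0 st; apply: mulr_gt0; rewrite subr_gt0.
- apply: log1sq_lt; rewrite !expr2.
  have : 0 < (t - s) * (t - s + 2) by apply: mulr_gt0; lra.
  nra.
- apply: nu_pdf_lt; rewrite !expr2.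
  have : 0 < (t + 2 - s) * (t + s) by apply: mulr_gt0; lra.
  nra.
Qed.

Lemma continuous_pair_gap s t : continuous (pair_gap s t).
Proof.
move=> x; apply: (@continuousM _ _ (fun x => log1sq (x - t) - log1sq (x - s))
  (fun x => nu_pdf x - nu_pdf (s + t - x))).
- apply: (@continuousB _ _ _ (fun x => log1sq (x - t)) (fun x => log1sq (x - s)));
    exact: continuous_log1sq_subr.
- apply: (@continuousB _ _ _ nu_pdf (fun x => nu_pdf (s + t - x))).
    exact: continuous_nu_pdf.
  exact: (continuous_comp_subl (a := s + t) continuous_nu_pdf).
Qed.

Lemma integral_F_integrand_pair s t : 0 <= s -> s < t ->
  (\int[mu]_x (F_integrand t x)%:E + \int[mu]_x (F_integrand t x)%:E =
   \int[mu]_x (pair_gap s t x)%:E +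
     (\int[mu]_x (F_integrand s x)%:E + \int[mu]_x (F_integrand s x)%:E))%E.
Proof.
move=> s0 st.
have cF u := @continuous_F_integrand u.
have cFr u := (continuous_comp_subl (a := s + t) (cF u)).
have Fr0 u x : 0 <= F_integrand u (s + t - x) by exact: F_integrand_ge0.
rewrite -{2}(ge0_integral_comp_subl (s + t) (@F_integrand_ge0 t) (cF t)).
rewrite -{2}(ge0_integral_comp_subl (s + t) (@F_integrand_ge0 s) (cF s)).
rewrite -(ge0_continuous_integralD (@F_integrand_ge0 t) (Fr0 t) (cF t) (cFr t)).
rewrite -(ge0_continuous_integralD (@F_integrand_ge0 s) (Fr0 s) (cF s) (cFr s)).
have sum0 x : 0 <= F_integrand s x + F_integrand s (s + t - x).
  by rewrite addr_ge0 ?F_integrand_ge0.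
have csum : continuous (fun x => F_integrand s x + F_integrand s (s + t - x)).
  by move=> x; apply: continuousD; [exact: cF | exact: cFr].
rewrite -(ge0_continuous_integralD (pair_gap_ge0 s0 st) sum0 (@continuous_pair_gap s t) csum).
by apply: eq_integral => x _; rewrite F_integrand_pair.
Qed.

Lemma F_m_lt s t : 0 <= s -> s < t -> F_m m s < F_m m t.
Proof.
move=> s0 st.
have fin u : (\int[mu]_x (F_integrand u x)%:E)%E \is a fin_num.
  rewrite ge0_fin_numE ?integral_F_integrand_lty// integral_ge0// => x _.
  by rewrite lee_fin F_integrand_ge0.
have gap_gt0 := ge0_continuous_integral_gt0 (pair_gap_ge0 s0 st)
  (@continuous_pair_gap s t) (pair_gap_gt0 s0 st).
rewrite !F_m_integrand; apply: fine_lt; [exact: fin | exact: fin |].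
move: (integral_F_integrand_pair s0 st) gap_gt0.
rewrite -(fineK (fin t)) -(fineK (fin s)).
case: (\int[mu]_x (pair_gap s t x)%:E)%E => [r| |] //.
rewrite -!EFinD !lte_fin => pairE r0.
by have := EFin_inj pairE; lra.
Qed.

End F_m_monotone.

Theorem lemma2p5 (R : realType) (m : R) (hm : 1 / 2 < m) :
  (forall s t : R, s < t -> t < 0 -> F_m m t < F_m m s) /\
  (forall s t : R, 0 < s -> s < t -> F_m m s < F_m m t) /\
  [set t : R | forall u : R, F_m m t <= F_m m u] = [set 0].
Proof.
have FN := F_mN hm; have Flt := F_m_lt hm.
split; [|split].
- by move=> s t st t0; rewrite -(FN t) -(FN s); apply: Flt; lra.
- by move=> s t s0 st; apply: Flt => //; exact: ltW.
apply/seteqP; split => [x /= xmin | x -> u /=].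
- have := xmin 0; have [x0|x0|//] := ltgtP x 0.
  + by rewrite -FN leNgt Flt ?lexx// oppr_gt0.
  + by rewrite leNgt Flt ?lexx.
- have [u0|u0|->] := ltgtP u 0; last exact: lexx.
  + by rewrite -(FN u); apply/ltW/Flt; lra.
  + exact/ltW/Flt.
Qed.
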